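(* Let $N\ge2$ and $1\le k\le N$. Then, as polynomials in $\xi_1,\dots,\xi_N$, \[ \sum_{\sigma\in S_N}\operatorname{sgn}(\sigma)\prod_{j=1}^k(1-\xi_{\sigma(j)})^{j-1}\prod_{j=k+1}^N(1-\xi_{\sigma(j)})^{j-2}\;\xi_{\sigma(1)}^{N-1}\xi_{\sigma(2)}^{N-2}\cdots\xi_{\sigma(N-1)}^{1}=(-1)^{N(N-1)/2}\prod_{1\le i<j\le N}(\xi_j-\xi_i). \] *)

From HB Require Import structures.
From mathcomp Require Import all_boot all_order all_algebra all_fingroup.
Set Implicit Arguments. Unset Strict Implicit. Unset Printing Implicit Defensive.

(* The j-th factor of each term is the value at xi_(s j) of the polynomial
   p_j = X^(N-1-j) (1 - X)^(e_j) with e_j <= j, so the sum is the determinant of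
   the matrix (p_j(xi_i)), which factors as (coefficient matrix)^T times the
   Vandermonde matrix.  The lowest monomial of p_j is X^(N-1-j) with coefficient
   1, so the coefficient matrix vanishes above its antidiagonal and has ones on
   it; its determinant is the sign (-1)^(N(N-1)/2) of the order reversal. *)

From HB Require Import structures.
From mathcomp Require Import all_boot all_order all_algebra all_fingroup.
From mathcomp Require Import zify.
Import GRing.Theory.
Local Open Scope ring_scope.

Lemma det_antitriangular (R : comPzRingType) n (A : 'M[R]_n.+1) :
  (forall i j : 'I_n.+1, (i + j < n)%N -> A i j = 0) ->
  (forall i j : 'I_n.+1, (i + j = n)%N -> A i j = 1) ->
  \det A = (-1) ^+ 'C(n.+1, 2).
Proof.
elim: n A => [|n IHn] A A0 A1; first by rewrite det_mx11 A1.
rewrite (expand_det_row _ ord0) (bigD1 ord_max) //= big1 ?addr0; last first.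
  move=> j /negbTE j_neq_max; rewrite A0 ?mul0r //=.
  by move: j_neq_max (ltn_ord j); rewrite -(inj_eq val_inj) /=; lia.
rewrite A1 //= mul1r /cofactor IHn.
- by rewrite -exprD add0n [in RHS]binS bin1 addnC.
- move=> i j ij_lt; rewrite !mxE; apply: A0 => /=.
  by rewrite /bump /=; have := ltn_ord j; lia.
- move=> i j ij_eq; rewrite !mxE; apply: A1 => /=.
  by rewrite /bump /=; have := ltn_ord j; lia.
Qed.

Lemma det_horner_mx (R : comNzRingType) n (p : 'I_n -> {poly R}) (x : 'I_n -> R) :
  (forall j, (size (p j) <= n)%N) ->
  \det (\matrix_(j, i) (p j).[x i])
  = \det (\matrix_(m < n, j < n) (p j)`_m) *
    \prod_(i < n) \prod_(j < n | (i < j)%N) (x j - x i).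
Proof.
move=> p_size.
have -> : \matrix_(j, i) (p j).[x i]
          = (\matrix_(m < n, j < n) (p j)`_m)^T *m Vandermonde n (\row_i x i).
  apply/matrixP => j i; rewrite !mxE (horner_coef_wide _ (p_size j)).
  by apply: eq_bigr => m _; rewrite !mxE.
rewrite det_mulmx det_tr det_Vandermonde; congr (_ * _).
by apply: eq_bigr => i _; apply: eq_bigr => j _; rewrite !mxE.
Qed.

Lemma size_polyXnM_1subX_exp (R : nzRingType) (a e : nat) :
  (size (('X^a * (1 - 'X) ^+ e)%R : {poly R}) <= (a + e).+1)%N.
Proof.
apply: leq_trans (size_polyMleq _ _) _; rewrite size_polyXn addSn /= -addnS leq_add2l.
apply: leq_trans (size_poly_exp_leq _ _) _.
have size_1subX : (size (1 - 'X : {poly R})).-1 = 1%N.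
  by rewrite -opprB size_polyN -polyC1 size_XsubC.
by rewrite size_1subX mul1n.
Qed.

Lemma coef0_1subX_exp (R : comNzRingType) e : ((1 - 'X) ^+ e : {poly R})`_0 = 1.
Proof. by rewrite -horner_coef0 !hornerE subr0 expr1n. Qed.

Theorem mainTheorem8 (N k : nat) (hN : (2 <= N)%N) (hk1 : (1 <= k)%N)
    (hkN : (k <= N)%N) (R : comNzRingType) (xi : 'I_N -> R) :
  \sum_(s : 'S_N)
     (-1) ^+ odd_perm s *
     \prod_(j < N)
        ((if (j < k)%N then (1 - xi (s j)) ^+ j else (1 - xi (s j)) ^+ j.-1)
         * xi (s j) ^+ (N.-1 - j))
  = (-1) ^+ (N * N.-1)./2 *
    \prod_(i < N) \prod_(j < N | (i < j)%N) (xi j - xi i).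
Proof.
case: N hN hkN xi => [//|n] _ _ xi.
pose e (j : 'I_n.+1) := if (j < k)%N then (j : nat) else j.-1.
pose p (j : 'I_n.+1) : {poly R} := 'X^(n - j) * (1 - 'X) ^+ e j.
transitivity (\det (\matrix_(j, i) (p j).[xi i])).
  apply: eq_bigr => s _; congr (_ * _); apply: eq_bigr => j _.
  by rewrite mxE !hornerE mulrC /e; case: ifP.
rewrite det_horner_mx => [|j]; last first.
  apply: leq_trans (size_polyXnM_1subX_exp _ _ _) _.
  by rewrite /e; have := ltn_ord j; case: ifP => _; lia.
rewrite (@det_antitriangular _ n) ?bin2 // => m j mj.
- by rewrite mxE /p coefXnM ifT //; lia.
- rewrite mxE /p coefXnM (_ : m - (n - j) = 0)%N; last by lia.
  by rewrite ifF ?coef0_1subX_exp //; apply/negbTE; rewrite -leqNgt; lia.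
Qed.
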